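(* For every real $t>0$, $$\lim_{n \to \infty} \sum_{k=0}^{n} N_{0,n-k}(k+t) = \frac{2}{3}.$$
   Context: $N_{0,m}$ denotes the uniform B-spline of degree $m$ with knots $0,1,\ldots,m+1$ and support $[0,m+1]$: $N_{0,0}(t)=\chi_{[0,1]}(t)$ (the indicator of $[0,1]$) and $N_{0,m}(t)=\int_{t-1}^{t}N_{0,m-1}(x)\,dx$ for $m\ge1$; i.e. $N_{0,m}$ is the $(m+1)$-fold convolution of $\chi_{[0,1]}$ with itself. *)

From Stdlib Require Import Reals.
From Coquelicot Require Import Coquelicot.
Open Scope R_scope.

Definition chi01 (t : R) : R :=
  if Rle_dec 0 t then (if Rle_dec t 1 then 1 else 0) else 0.

(* Uniform B-spline N_{0,m} of degree m with knots 0,1,...,m+1: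
   N_{0,0} = chi_[0,1],  N_{0,m}(t) = int_{t-1}^{t} N_{0,m-1}(x) dx. *)
Fixpoint Bspline (m : nat) (t : R) : R :=
  match m with
  | O => chi01 t
  | S m' => RInt (Bspline m') (t - 1) t
  end.

From Stdlib Require Import Reals Lra Lia ZArith Factorial.
From Coquelicot Require Import Coquelicot.
Open Scope R_scope.

(* Reindexing, the n-th sum is S_n(n + 1 + t), where S_n(x) = sum_{j <= n} N_{0,j}(x - j - 1).
   As N_{0,j} vanishes on (-oo, 0), S_n(x) no longer depends on n once x < n + 2; call this
   common value u(x). The B-spline recursion gives u(x) = chi_[0,1](x - 1) + int_{x-2}^{x-1} u,
   so for x >= 3 the value u(x) is the mean of u over [x - 2, x - 1]. For such a function the
   oscillation on [b - 2, oo) shrinks by the factor 127/128 when b advances by 23/4, and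
   Psi(x) = int_{x-2}^{x-1} int_s^x u is constant (its derivative is u(x) minus the mean)
   while lying between 3/2 inf u and 3/2 sup u over [x - 2, x]; hence u tends to
   2/3 Psi(3) = 2/3. Finally u(n + 1 + t) - S_n(n + 1 + t) is a sum of terms
   N_{0,j}(y) <= |t|^j / j! with j > n, which tends to 0. *)

(** * Real-valued Riemann integrals *)

Lemma nat_above x : exists n, x < INR n.
Proof. destruct (INR_unbounded x) as [n Hn]. exists n. lra. Qed.

Definition ex_RInt_all (f : R -> R) : Prop := forall a b, ex_RInt f a b.

Lemma RInt_correct_R (f : R -> R) a b : ex_RInt f a b -> is_RInt f a b (RInt f a b).
Proof. exact (RInt_correct (V := R_CompleteNormedModule) f a b). Qed.

Lemma RInt_Chasles_R (f : R -> R) a b c :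
  ex_RInt f a b -> ex_RInt f b c -> RInt f a b + RInt f b c = RInt f a c.
Proof. exact (RInt_Chasles f a b c). Qed.

Lemma RInt_const_R a b c : RInt (fun _ => c) a b = (b - a) * c :> R.
Proof. exact (RInt_const a b c). Qed.

Lemma RInt_minus_R (f g : R -> R) a b : ex_RInt f a b -> ex_RInt g a b ->
  RInt (fun y => f y - g y) a b = RInt f a b - RInt g a b :> R.
Proof. exact (RInt_minus f g a b). Qed.

Lemma is_RInt_affine (f : R -> R) a b al be l : is_RInt f a b l ->
  is_RInt (fun y => al * f y + be) a b (al * l + (b - a) * be).
Proof.
  intros Hf. apply (is_RInt_plus (fun y => scal al (f y)) (fun _ => be)).
  - apply (is_RInt_scal f a b al l), Hf.
  - apply (is_RInt_const (V := R_NormedModule)).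
Qed.

Lemma RInt_affine (f : R -> R) a b al be : ex_RInt f a b ->
  RInt (fun y => al * f y + be) a b = al * RInt f a b + (b - a) * be :> R.
Proof. intros Hf. apply is_RInt_unique, is_RInt_affine, RInt_correct_R, Hf. Qed.

Lemma ex_RInt_all_affine h a c : ex_RInt_all h -> ex_RInt_all (fun y => a * h y + c).
Proof. intros Hint x y. eexists. apply is_RInt_affine, RInt_correct_R, Hint. Qed.

Lemma RInt_ge_const (f : R -> R) a b c : a <= b -> ex_RInt f a b ->
  (forall x, a < x < b -> c <= f x) -> (b - a) * c <= RInt f a b.
Proof.
  intros Hab Hf Hc. rewrite <- RInt_const_R.
  apply RInt_le; auto. apply ex_RInt_const.
Qed.

Lemma RInt_le_const (f : R -> R) a b c : a <= b -> ex_RInt f a b ->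
  (forall x, a < x < b -> f x <= c) -> RInt f a b <= (b - a) * c.
Proof.
  intros Hab Hf Hc. rewrite <- RInt_const_R.
  apply RInt_le; auto. apply ex_RInt_const.
Qed.

Lemma RInt_eq_const (f : R -> R) a b c : a <= b ->
  (forall x, a < x < b -> f x = c) -> RInt f a b = (b - a) * c :> R.
Proof.
  intros Hab Hf. rewrite (RInt_ext f (fun _ => c)).
  - apply RInt_const_R.
  - intros x Hx. rewrite Rmin_left, Rmax_right in Hx by lra. auto.
Qed.

Lemma RInt_eq_0 (f : R -> R) a b : a <= b ->
  (forall x, a < x < b -> f x = 0) -> RInt f a b = 0 :> R.
Proof. intros Hab Hf. rewrite (RInt_eq_const f a b 0); auto. ring. Qed.

Lemma ex_RInt_eq_const (f : R -> R) a b c : a <= b ->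
  (forall x, a < x < b -> f x = c) -> ex_RInt f a b.
Proof.
  intros Hab Hf. apply (ex_RInt_ext (fun _ => c)); [|apply ex_RInt_const].
  intros x Hx. rewrite Rmin_left, Rmax_right in Hx by lra. symmetry. auto.
Qed.

Lemma is_RInt_translate (f : R -> R) a b c l :
  is_RInt f (a + c) (b + c) l -> is_RInt (fun s => f (s + c)) a b l.
Proof.
  intros Hf.
  pose proof (is_RInt_comp_lin f 1 c a b l) as Hlin.
  rewrite !Rmult_1_l in Hlin. specialize (Hlin Hf).
  apply (is_RInt_ext (fun y : R => scal 1 (f (1 * y + c)))); [|exact Hlin].
  intros x _. change (1 * f (1 * x + c) = f (x + c)). rewrite !Rmult_1_l. reflexivity.
Qed.

Lemma is_RInt_sum_f_R0 (g : nat -> R -> R) (I : nat -> R) a b n :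
  (forall k, is_RInt (g k) a b (I k)) ->
  is_RInt (fun s => sum_f_R0 (fun k => g k s) n) a b (sum_f_R0 I n).
Proof.
  intros H. induction n as [|n IH]; simpl.
  - apply H.
  - apply (is_RInt_plus (fun s => sum_f_R0 (fun k => g k s) n) (g (S n))); auto.
Qed.

Lemma is_RInt_id a b : is_RInt (fun y => y) a b ((b ^ 2 - a ^ 2) / 2).
Proof.
  replace ((b ^ 2 - a ^ 2) / 2) with (b ^ 2 / 2 - a ^ 2 / 2) by field.
  apply (is_RInt_derive (fun y => y ^ 2 / 2)).
  - intros y _. auto_derive; [exact I | field].
  - intros y _. apply continuous_id.
Qed.

Lemma continuous_RInt_from (f : R -> R) a x :
  ex_RInt_all f -> continuous (fun y => RInt f a y) x.
Proof.
  intros Hf. apply (continuous_RInt_1 f a x).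
  apply filter_forall. intros y. apply RInt_correct_R, Hf.
Qed.

Lemma ex_RInt_all_continuous (f : R -> R) :
  (forall x, continuous f x) -> ex_RInt_all f.
Proof.
  intros Hf a b. apply (ex_RInt_continuous (V := R_CompleteNormedModule)).
  intros; apply Hf.
Qed.

Lemma ex_RInt_all_RInt_from (f : R -> R) a :
  ex_RInt_all f -> ex_RInt_all (fun y => RInt f a y).
Proof.
  intros Hf. apply ex_RInt_all_continuous. intros x. apply continuous_RInt_from, Hf.
Qed.

Lemma RInt_window (f : R -> R) a b : ex_RInt_all f ->
  RInt f a b = RInt f 0 b - RInt f 0 a :> R.
Proof. intros Hf. rewrite <- (RInt_Chasles_R f 0 a b) by apply Hf. lra. Qed.

Lemma continuous_shift (f : R -> R) c x :
  continuous f (x - c) -> continuous (fun y => f (y - c)) x.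
Proof.
  intros Hf. apply (continuous_comp (fun y => y - c) f); [|exact Hf].
  apply (continuous_minus (fun y => y) (fun _ => c)).
  - apply continuous_id.
  - apply continuous_const.
Qed.

Lemma continuous_RInt_window (f : R -> R) c d x : ex_RInt_all f ->
  continuous (fun y => RInt f (y - c) (y - d)) x.
Proof.
  intros Hf.
  apply (continuous_ext (fun y => RInt f 0 (y - d) - RInt f 0 (y - c))).
  { intros y. symmetry. apply RInt_window, Hf. }
  apply (continuous_minus (fun y => RInt f 0 (y - d)) (fun y => RInt f 0 (y - c)));
    apply (continuous_shift (fun y => RInt f 0 y)), continuous_RInt_from, Hf.
Qed.

Lemma is_derive_RInt_from (f : R -> R) a x : ex_RInt_all f -> continuous f x ->
  is_derive (fun y => RInt f a y) x (f x).
Proof.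
  intros Hf Hc. apply (is_derive_RInt f _ a x); [|exact Hc].
  apply filter_forall. intros y. apply RInt_correct_R, Hf.
Qed.

Lemma is_derive_RInt_window (f : R -> R) c d x : (forall y, continuous f y) ->
  is_derive (fun y => RInt f (y - c) (y - d)) x (f (x - d) - f (x - c)).
Proof.
  intros Hf. assert (Hint := ex_RInt_all_continuous f Hf).
  apply (is_derive_ext (fun y => RInt f 0 (y - d) - RInt f 0 (y - c))).
  { intros y. symmetry. apply RInt_window, Hint. }
  auto_derive.
  - repeat split; try apply Hint;
      apply filter_forall; intros y; apply continuity_pt_filterlim, Hf.
  - unfold Rminus. ring.
Qed.

(** * Uniform B-splines *)

Lemma ex_RInt_all_chi01 : ex_RInt_all chi01.
Proof.
  intros a b. set (K := Rabs a + Rabs b + 1).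
  assert (Ha := Rle_abs a). assert (Ha' := Rle_abs (- a)).
  assert (Hb := Rle_abs b). assert (Hb' := Rle_abs (- b)).
  rewrite Rabs_Ropp in Ha', Hb'.
  apply (ex_RInt_inside chi01 a b 0 K);
    [| rewrite Rminus_0_r; apply Rabs_le; unfold K; lra ..].
  replace (0 - K) with (- K) by ring. rewrite Rplus_0_l.
  unfold chi01. apply (ex_RInt_Chasles _ (- K) 0 K);
    [|apply (ex_RInt_Chasles _ 0 1 K)];
    [apply (ex_RInt_eq_const _ _ _ 0) | apply (ex_RInt_eq_const _ _ _ 1)
    | apply (ex_RInt_eq_const _ _ _ 0)];
    try (unfold K; lra); intros x Hx;
    destruct (Rle_dec 0 x); try lra; destruct (Rle_dec x 1); lra.
Qed.

Lemma Bspline_S m t : Bspline (S m) t = RInt (Bspline m) (t - 1) t.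
Proof. reflexivity. Qed.

Lemma ex_RInt_all_Bspline m : ex_RInt_all (Bspline m).
Proof.
  induction m as [|m IH]; [exact ex_RInt_all_chi01|].
  apply ex_RInt_all_continuous. intros x.
  apply (continuous_ext (fun y => RInt (Bspline m) (y - 1) (y - 0))).
  - intros y. now rewrite Rminus_0_r.
  - apply continuous_RInt_window, IH.
Qed.

Lemma Bspline_eq_0_neg m y : y < 0 -> Bspline m y = 0.
Proof.
  revert y. induction m as [|m IH]; intros y Hy.
  - simpl. unfold chi01. destruct (Rle_dec 0 y); lra.
  - rewrite Bspline_S. apply RInt_eq_0; [lra|]. intros x Hx. apply IH. lra.
Qed.

Lemma Bspline_bounds m y : 0 <= Bspline m y <= 1.
Proof.
  revert y. induction m as [|m IH]; intros y.
  - simpl. unfold chi01. destruct (Rle_dec 0 y); try lra. destruct (Rle_dec y 1); lra.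
  - rewrite Bspline_S. split.
    + apply RInt_ge_0; [lra | apply ex_RInt_all_Bspline | intros; apply IH].
    + assert (H : RInt (Bspline m) (y - 1) y <= (y - (y - 1)) * 1).
      { apply RInt_le_const; [lra | apply ex_RInt_all_Bspline | intros; apply IH]. }
      lra.
Qed.

Lemma is_RInt_pow_fact m a b :
  is_RInt (fun s => s ^ m / INR (fact m)) a b
    (b ^ S m / INR (fact (S m)) - a ^ S m / INR (fact (S m))).
Proof.
  assert (Hm : INR (fact m) <> 0) by apply INR_fact_neq_0.
  assert (HSm : INR (S m) <> 0) by (apply not_0_INR; lia).
  apply (is_RInt_derive (fun s => s ^ S m / INR (fact (S m)))).
  - intros x _. auto_derive; [exact I|].
    replace (match m with 0%nat => 1 | S _ => INR m + 1 end) with (INR (S m))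
      by (destruct m; reflexivity).
    replace (fact m + m * fact m)%nat with (S m * fact m)%nat by lia.
    rewrite mult_INR. field. split; assumption.
  - intros x _. apply (ex_derive_continuous (fun s => s ^ m / INR (fact m))).
    auto_derive. exact I.
Qed.

Lemma Bspline_le_pow_fact m y : 0 <= y -> Bspline m y <= y ^ m / INR (fact m).
Proof.
  revert y. induction m as [|m IH]; intros y Hy.
  - simpl. unfold Rdiv. rewrite Rinv_1, Rmult_1_r. exact (proj2 (Bspline_bounds 0 y)).
  - set (g := fun s => s ^ m / INR (fact m)).
    assert (Hg : forall a b,
               is_RInt g a b (b ^ S m / INR (fact (S m)) - a ^ S m / INR (fact (S m))))
      by apply is_RInt_pow_fact.
    assert (Hg0 : forall s, 0 <= s -> 0 <= g s).
    { intros s Hs. apply Rdiv_le_0_compat; [apply pow_le; lra | apply INR_fact_lt_0]. }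
    assert (Hint : ex_RInt_all g) by (intros a b; eexists; apply Hg).
    assert (HNg : forall a b, 0 <= a <= b -> RInt (Bspline m) a b <= RInt g a b).
    { intros a b Hab. apply RInt_le; [lra | apply ex_RInt_all_Bspline | apply Hint |].
      intros x Hx. apply IH. lra. }
    assert (Hprim : RInt g 0 y = y ^ S m / INR (fact (S m)) :> R).
    { rewrite (is_RInt_unique _ _ _ _ (Hg _ _)). simpl (0 ^ S m).
      field. apply INR_fact_neq_0. }
    rewrite <- Hprim.
    rewrite Bspline_S, <- (RInt_Chasles_R (Bspline m) (y - 1) (Rmax 0 (y - 1)) y)
      by apply ex_RInt_all_Bspline.
    unfold Rmax. destruct (Rle_dec 0 (y - 1)).
    + rewrite <- (RInt_Chasles_R g 0 (y - 1) y) by apply Hint.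
      rewrite (RInt_eq_0 _ (y - 1) (y - 1)) by (try lra; intros; lra).
      assert (0 <= RInt g 0 (y - 1)) by (apply RInt_ge_0; auto; intros; apply Hg0; lra).
      assert (RInt (Bspline m) (y - 1) y <= RInt g (y - 1) y) by (apply HNg; lra).
      lra.
    + rewrite RInt_eq_0 by (try lra; intros; apply Bspline_eq_0_neg; lra).
      assert (RInt (Bspline m) 0 y <= RInt g 0 y) by (apply HNg; lra).
      lra.
Qed.

Lemma Bspline_le_pow_fact_ub m y r : 0 <= r -> y <= r ->
  Bspline m y <= r ^ m / INR (fact m).
Proof.
  intros Hr Hy. destruct (Rlt_dec y 0).
  - rewrite Bspline_eq_0_neg by assumption.
    apply Rdiv_le_0_compat; [apply pow_le; lra | apply INR_fact_lt_0].
  - eapply Rle_trans; [apply Bspline_le_pow_fact; lra|].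
    apply Rmult_le_compat_r; [left; apply Rinv_0_lt_compat, INR_fact_lt_0|].
    apply pow_incr. lra.
Qed.

(** * Sums of shifted B-splines *)

Definition spline_sum (n : nat) (x : R) : R :=
  sum_f_R0 (fun j => Bspline j (x - INR j - 1)) n.

Lemma sum_Bspline_reverse n t :
  sum_f_R0 (fun k => Bspline (n - k) (INR k + t)) n = spline_sum n (INR n + 1 + t).
Proof.
  unfold spline_sum.
  rewrite <- (sum_f_R0_skip (fun j => Bspline j (INR n + 1 + t - INR j - 1))).
  apply sum_eq. intros k Hk. rewrite minus_INR by assumption. f_equal. ring.
Qed.

Lemma spline_sum_S n x :
  spline_sum (S n) x = spline_sum n x + Bspline (S n) (x - INR (S n) - 1).
Proof. reflexivity. Qed.

Lemma spline_sum_stable n p x : x < INR n + 2 -> spline_sum (n + p) x = spline_sum n x.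
Proof.
  intros Hx. induction p as [|p IH]; [now rewrite Nat.add_0_r|].
  rewrite Nat.add_succ_r, spline_sum_S, IH, Bspline_eq_0_neg; [ring|].
  rewrite S_INR, plus_INR. pose proof (pos_INR p). lra.
Qed.

Lemma spline_sum_bounds n x : 0 <= spline_sum n x <= INR n + 1.
Proof.
  induction n as [|n IH].
  - simpl INR. rewrite Rplus_0_l. apply Bspline_bounds.
  - pose proof (Bspline_bounds (S n) (x - INR (S n) - 1)).
    pose proof (S_INR n). rewrite spline_sum_S. lra.
Qed.

Lemma is_RInt_spline_term j a b :
  is_RInt (fun s => Bspline j (s - INR j - 1)) a b
    (RInt (Bspline j) (a - INR j - 1) (b - INR j - 1)).
Proof.
  apply (is_RInt_ext (fun s => Bspline j (s + (- INR j - 1)))).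
  { intros s _. f_equal. ring. }
  apply is_RInt_translate.
  replace (a + (- INR j - 1)) with (a - INR j - 1) by ring.
  replace (b + (- INR j - 1)) with (b - INR j - 1) by ring.
  apply RInt_correct_R, ex_RInt_all_Bspline.
Qed.

Lemma ex_RInt_all_spline_sum n : ex_RInt_all (spline_sum n).
Proof.
  intros a b. eexists.
  apply (is_RInt_sum_f_R0 (fun j s => Bspline j (s - INR j - 1))).
  intros j. apply is_RInt_spline_term.
Qed.

Lemma spline_sum_recursion n x :
  spline_sum (S n) x = chi01 (x - 1) + RInt (spline_sum n) (x - 2) (x - 1).
Proof.
  unfold spline_sum at 1. rewrite decomp_sum by lia. simpl pred. f_equal.
  - simpl. f_equal. ring.
  - symmetry. apply is_RInt_unique.
    replace (sum_f_R0 _ n)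
      with (sum_f_R0 (fun j => RInt (Bspline j) (x - 2 - INR j - 1) (x - 1 - INR j - 1)) n).
    + apply (is_RInt_sum_f_R0 (fun j s => Bspline j (s - INR j - 1))).
      intros j. apply is_RInt_spline_term.
    + apply sum_eq. intros j _. rewrite Bspline_S, S_INR. f_equal; ring.
Qed.

Definition spline_limit (x : R) : R := spline_sum (Z.to_nat (up x)) x.

Lemma spline_limit_eq n x : x < INR n + 2 -> spline_limit x = spline_sum n x.
Proof.
  intros Hx. unfold spline_limit. set (K := Z.to_nat (up x)).
  assert (HK : x < INR K + 2).
  { destruct (archimed x) as [Hup _]. unfold K.
    destruct (Z.lt_ge_cases (up x) 0) as [Hneg | Hpos].
    - apply IZR_lt in Hneg. pose proof (pos_INR (Z.to_nat (up x))). lra.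
    - rewrite INR_IZR_INZ, Z2Nat.id by lia. lra. }
  destruct (le_lt_dec n K) as [H | H].
  - replace K with (n + (K - n))%nat by lia. now apply spline_sum_stable.
  - replace n with (K + (n - K))%nat by lia. symmetry. now apply spline_sum_stable.
Qed.

Lemma ex_RInt_all_spline_limit : ex_RInt_all spline_limit.
Proof.
  intros a b. destruct (nat_above (Rabs a + Rabs b)) as [n Hn].
  apply (ex_RInt_ext (spline_sum n)); [|apply ex_RInt_all_spline_sum].
  intros x Hx. symmetry. apply spline_limit_eq.
  assert (Rmax a b <= Rabs a + Rabs b); [|lra].
  pose proof (Rle_abs a). pose proof (Rle_abs b).
  pose proof (Rabs_pos a). pose proof (Rabs_pos b).
  unfold Rmax. destruct (Rle_dec a b); lra.
Qed.

Lemma spline_limit_recursion x :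
  spline_limit x = chi01 (x - 1) + RInt spline_limit (x - 2) (x - 1).
Proof.
  destruct (nat_above x) as [n Hn].
  rewrite (spline_limit_eq (S n)) by (rewrite S_INR; lra).
  rewrite spline_sum_recursion. f_equal.
  apply RInt_ext. intros y Hy. rewrite Rmin_left, Rmax_right in Hy by lra.
  symmetry. apply spline_limit_eq. lra.
Qed.

(** * Functions equal to their mean over a trailing window *)

Definition window_average (h : R -> R) (x0 : R) : Prop :=
  forall x, x0 <= x -> h x = RInt h (x - 2) (x - 1).

Definition window_invariant (h : R -> R) (x : R) : R :=
  RInt (fun s => RInt h s x) (x - 2) (x - 1).

Lemma window_average_affine h x0 a c : ex_RInt_all h -> window_average h x0 ->
  window_average (fun y => a * h y + c) x0.
Proof.
  intros Hint Havg x Hx. rewrite RInt_affine by apply Hint.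
  rewrite <- Havg by assumption. ring.
Qed.

Section NonnegativeWindowAverage.

Variables (g : R -> R) (b : R).
Hypotheses (g_int : ex_RInt_all g) (g_avg : window_average g b)
  (g_ge0 : forall y, b - 2 <= y -> 0 <= g y).

Lemma window_average_ge_mass x : b <= x <= b + 1/2 -> RInt g (b - 3/2) (b - 1) <= g x.
Proof.
  intros Hx. rewrite g_avg by lra.
  rewrite <- (RInt_Chasles_R g (x - 2) (b - 3/2) (x - 1)) by apply g_int.
  rewrite <- (RInt_Chasles_R g (b - 3/2) (b - 1) (x - 1)) by apply g_int.
  assert (0 <= RInt g (x - 2) (b - 3/2))
    by (apply RInt_ge_0; auto; try lra; intros; apply g_ge0; lra).
  assert (0 <= RInt g (b - 1) (x - 1))
    by (apply RInt_ge_0; auto; try lra; intros; apply g_ge0; lra).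
  lra.
Qed.

Lemma window_average_ge_spread p q c d x : 0 <= c -> 0 < d <= 1 -> d <= q - p ->
  (forall y, p <= y <= q -> c <= g y) ->
  b <= x -> p + 1 + d <= x <= q + 2 - d -> c * d <= g x.
Proof.
  intros Hc Hd Hpq Hg Hbx Hx. rewrite g_avg by lra.
  set (lo := Rmax (x - 2) p). set (hi := Rmin (x - 1) q).
  assert (Hlo : x - 2 <= lo /\ p <= lo /\ (lo = x - 2 \/ lo = p)).
  { unfold lo, Rmax. destruct (Rle_dec (x - 2) p); lra. }
  assert (Hhi : hi <= x - 1 /\ hi <= q /\ (hi = x - 1 \/ hi = q)).
  { unfold hi, Rmin. destruct (Rle_dec (x - 1) q); lra. }
  rewrite <- (RInt_Chasles_R g (x - 2) lo (x - 1)) by apply g_int.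
  rewrite <- (RInt_Chasles_R g lo hi (x - 1)) by apply g_int.
  assert (0 <= RInt g (x - 2) lo)
    by (apply RInt_ge_0; auto; try lra; intros; apply g_ge0; lra).
  assert (0 <= RInt g hi (x - 1))
    by (apply RInt_ge_0; auto; try lra; intros; apply g_ge0; lra).
  assert ((hi - lo) * c <= RInt g lo hi)
    by (apply RInt_ge_const; auto; try lra; intros; apply Hg; lra).
  assert (c * d <= (hi - lo) * c) by nra.
  lra.
Qed.

(* Three spreading steps with [d = 1/4] carry the bound from [b, b + 1/2] to an
   interval of length 2, losing a factor 4 each time. *)
Lemma window_average_ge_later x : b + 15/4 <= x <= b + 23/4 ->
  RInt g (b - 3/2) (b - 1) / 64 <= g x.
Proof.
  set (I := RInt g (b - 3/2) (b - 1)).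
  assert (HI : 0 <= I) by (apply RInt_ge_0; auto; try lra; intros; apply g_ge0; lra).
  assert (H1 := window_average_ge_spread b (b + 1/2) I (1/4)).
  assert (H2 := window_average_ge_spread (b + 5/4) (b + 9/4) (I * (1/4)) (1/4)).
  assert (H3 := window_average_ge_spread (b + 5/2) (b + 4) (I * (1/4) * (1/4)) (1/4)).
  intros Hx. enough (I * (1/4) * (1/4) * (1/4) <= g x) by lra.
  apply H3; try lra. intros y Hy.
  apply H2; try lra. intros z Hz.
  apply H1; try lra. intros w Hw.
  apply window_average_ge_mass. lra.
Qed.

End NonnegativeWindowAverage.

Section WindowAverage.

Variables (h : R -> R) (x0 : R).
Hypotheses (h_int : ex_RInt_all h) (h_avg : window_average h x0).

Lemma window_average_bounds b m M : x0 <= b ->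
  (forall y, b - 2 <= y <= b -> m <= h y <= M) -> forall y, b - 2 <= y -> m <= h y <= M.
Proof.
  intros Hb Hinit.
  assert (Hn : forall n y, b - 2 <= y <= b + INR n -> m <= h y <= M).
  { induction n as [|n IH]; intros y Hy.
    - apply Hinit. simpl in Hy. lra.
    - rewrite S_INR in Hy.
      destruct (Rle_lt_dec y (b + INR n)) as [Hle | Hgt]; [apply IH; lra|].
      pose proof (pos_INR n) as Hn0. rewrite h_avg by lra. split.
      + assert (Hlow : (y - 1 - (y - 2)) * m <= RInt h (y - 2) (y - 1))
          by (apply RInt_ge_const; [lra | apply h_int | intros z Hz; apply IH; lra]).
        lra.
      + assert (Hup : RInt h (y - 2) (y - 1) <= (y - 1 - (y - 2)) * M)
          by (apply RInt_le_const; [lra | apply h_int | intros z Hz; apply IH; lra]).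
        lra. }
  intros y Hy. destruct (nat_above (y - b)) as [n Hyn]. apply (Hn n). lra.
Qed.

Lemma window_average_contract b m M : x0 <= b ->
  (forall y, b - 2 <= y -> m <= h y <= M) ->
  exists m' M', M' - m' <= 127/128 * (M - m) /\
    forall y, b + 15/4 <= y -> m' <= h y <= M'.
Proof.
  intros Hb Hbnd.
  assert (Havg_b : window_average h b) by (intros x Hx; apply h_avg; lra).
  set (v := fun y => 1 * h y + - m). set (w := fun y => -1 * h y + M).
  assert (Hv := window_average_ge_later v b
    (ex_RInt_all_affine h 1 (- m) h_int) (window_average_affine h b 1 (- m) h_int Havg_b)
    (fun y Hy => ltac:(unfold v; specialize (Hbnd y Hy); lra))).
  assert (Hw := window_average_ge_later w b
    (ex_RInt_all_affine h (-1) M h_int) (window_average_affine h b (-1) M h_int Havg_b)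
    (fun y Hy => ltac:(unfold w; specialize (Hbnd y Hy); lra))).
  set (Iv := RInt v (b - 3/2) (b - 1)) in *. set (Iw := RInt w (b - 3/2) (b - 1)) in *.
  assert (Hsum : Iv + Iw = (M - m) / 2).
  { unfold Iv, Iw, v, w. rewrite !RInt_affine by apply h_int. field. }
  assert (Hv0 : 0 <= Iv).
  { apply RInt_ge_0; [lra | apply ex_RInt_all_affine, h_int |].
    intros y Hy. unfold v. specialize (Hbnd y ltac:(lra)). lra. }
  assert (Hw0 : 0 <= Iw).
  { apply RInt_ge_0; [lra | apply ex_RInt_all_affine, h_int |].
    intros y Hy. unfold w. specialize (Hbnd y ltac:(lra)). lra. }
  (* [h - m] and [M - h] gain [1/64] of their masses on [b - 3/2, b - 1], and these
     masses add up to [(M - m) / 2]. *)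
  exists (m + Iv / 64), (M - Iw / 64). split; [lra|].
  intros y0 Hy0. apply (window_average_bounds (b + 23/4)); [lra | | lra].
  intros y Hy. specialize (Hv y ltac:(lra)). specialize (Hw y ltac:(lra)).
  unfold v, w in *. lra.
Qed.

Lemma window_average_oscillation m0 M0 k :
  (forall y, x0 - 2 <= y <= x0 -> m0 <= h y <= M0) ->
  exists m M, M - m <= (127/128) ^ k * (M0 - m0) /\
    forall y, x0 - 2 + INR k * (23/4) <= y -> m <= h y <= M.
Proof.
  intros Hinit. induction k as [|k IH].
  - exists m0, M0. split; [simpl; lra|].
    simpl INR. rewrite Rmult_0_l, Rplus_0_r.
    apply window_average_bounds; [lra | exact Hinit].
  - destruct IH as (m & M & Hosc & Hbnd).
    destruct (window_average_contract (x0 + INR k * (23/4)) m M)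
      as (m' & M' & Hosc' & Hbnd').
    + pose proof (pos_INR k). nra.
    + intros y Hy. apply Hbnd. lra.
    + exists m', M'. split.
      * assert (0 <= M - m) by (specialize (Hbnd (x0 - 2 + INR k * (23/4)) ltac:(lra)); lra).
        simpl. nra.
      * intros y Hy. apply Hbnd'. rewrite S_INR in Hy. lra.
Qed.

Lemma window_invariant_primitive x : window_invariant h x =
  RInt h 0 x - RInt (fun y => RInt h 0 y) (x - 2) (x - 1) :> R.
Proof.
  unfold window_invariant.
  rewrite (RInt_ext _ (fun s => RInt h 0 x - RInt h 0 s)).
  - rewrite RInt_minus_R, RInt_const_R.
    + replace (x - 1 - (x - 2)) with 1 by ring. now rewrite Rmult_1_l.
    + apply ex_RInt_const.
    + apply ex_RInt_all_RInt_from, h_int.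
  - intros s _. apply RInt_window, h_int.
Qed.

Lemma window_invariant_bounds x m M : (forall y, x - 2 <= y <= x -> m <= h y <= M) ->
  3/2 * m <= window_invariant h x <= 3/2 * M.
Proof.
  intros Hbnd.
  assert (Hweight : forall c, RInt (fun s => (x - s) * c) (x - 2) (x - 1) = 3/2 * c :> R).
  { intros c. rewrite (RInt_ext _ (fun s => - c * s + x * c)) by (intros; lra).
    rewrite (RInt_affine (fun s => s)) by (eexists; apply is_RInt_id).
    rewrite (is_RInt_unique _ _ _ _ (is_RInt_id _ _)). field. }
  assert (Hint : ex_RInt (fun s => RInt h s x) (x - 2) (x - 1)).
  { apply (ex_RInt_ext (fun s => RInt h 0 x - RInt h 0 s)).
    - intros s _. symmetry. apply RInt_window, h_int.
    - apply (ex_RInt_minus (V := R_NormedModule)).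
      + apply ex_RInt_const.
      + apply ex_RInt_all_RInt_from, h_int. }
  assert (Hlin : forall c, ex_RInt (fun s => (x - s) * c) (x - 2) (x - 1)).
  { intros c. apply ex_RInt_all_continuous. intros s.
    apply (ex_derive_continuous (fun s => (x - s) * c)). auto_derive. exact I. }
  unfold window_invariant. rewrite <- (Hweight m), <- (Hweight M).
  split; apply RInt_le; auto; try lra; intros s Hs.
  - apply RInt_ge_const; [lra | apply h_int | intros; apply Hbnd; lra].
  - apply RInt_le_const; [lra | apply h_int | intros; apply Hbnd; lra].
Qed.

Lemma continuous_window_average x : x0 < x -> continuous h x.
Proof.
  intros Hx. apply (continuous_ext_loc _ (fun y => RInt h (y - 2) (y - 1))).
  - apply (filter_imp (fun y => x0 < y)).
    + intros y Hy. symmetry. apply h_avg. lra.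
    + apply (locally_open (fun y => x0 < y)); [apply open_gt | now intros | exact Hx].
  - apply continuous_RInt_window, h_int.
Qed.

Lemma window_invariant_const x : x0 <= x -> window_invariant h x = window_invariant h x0.
Proof.
  intros Hx. rewrite !window_invariant_primitive.
  set (F := fun y => RInt h 0 y - RInt (fun z => RInt h 0 z) (y - 2) (y - 1)).
  assert (HP : forall y, continuous (fun z => RInt h 0 z) y)
    by (intros; apply continuous_RInt_from, h_int).
  destruct (MVT_gen F x0 x (fun _ => 0)) as (c & _ & Hc).
  - intros y Hy. rewrite Rmin_left, Rmax_right in Hy by lra.
    replace 0 with (h y - (RInt h 0 (y - 1) - RInt h 0 (y - 2))).
    + apply (is_derive_minus (fun y => RInt h 0 y)
               (fun y => RInt (fun z => RInt h 0 z) (y - 2) (y - 1))).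
      * apply is_derive_RInt_from; [exact h_int | apply continuous_window_average; lra].
      * apply is_derive_RInt_window, HP.
    + rewrite h_avg, (RInt_window h (y - 2)) by (exact h_int || lra). ring.
  - intros y _. apply continuity_pt_filterlim.
    apply (continuous_minus (fun y => RInt h 0 y)
             (fun y => RInt (fun z => RInt h 0 z) (y - 2) (y - 1))).
    + apply HP.
    + apply continuous_RInt_window, ex_RInt_all_RInt_from, h_int.
  - unfold F in Hc. lra.
Qed.

Theorem window_average_lim m0 M0 : (forall y, x0 - 2 <= y <= x0 -> m0 <= h y <= M0) ->
  is_lim h p_infty (2/3 * window_invariant h x0).
Proof.
  intros Hinit. apply is_lim_spec. intros eps.
  assert (Hspread : 0 <= M0 - m0) by (specialize (Hinit x0 ltac:(lra)); lra).
  destruct (pow_lt_1_zero (127/128) ltac:(rewrite Rabs_right; lra)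
              (eps / (M0 - m0 + 1)) ltac:(apply Rdiv_lt_0_compat; [apply cond_pos | lra]))
    as [k Hk].
  specialize (Hk k (le_n k)). rewrite Rabs_right in Hk by (apply Rle_ge, pow_le; lra).
  destruct (window_average_oscillation m0 M0 k Hinit) as (m & M & Hosc & Hbnd).
  exists (x0 - 2 + INR k * (23/4)). intros y Hy.
  assert (Hinv := window_invariant_bounds (x0 + INR k * (23/4)) m M
                    (fun z Hz => Hbnd z ltac:(lra))).
  rewrite window_invariant_const in Hinv by (pose proof (pos_INR k); nra).
  assert (Hsmall : (127/128) ^ k * (M0 - m0) < eps).
  { apply (Rmult_lt_compat_r (M0 - m0 + 1)) in Hk; [|lra].
    unfold Rdiv in Hk. rewrite Rmult_assoc, Rinv_l, Rmult_1_r in Hk by lra.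
    assert (0 <= (127/128) ^ k) by (apply pow_le; lra). nra. }
  specialize (Hbnd y ltac:(lra)). apply Rabs_def1; lra.
Qed.

End WindowAverage.

Lemma spline_limit_window_average : window_average spline_limit 3.
Proof.
  intros x Hx. rewrite spline_limit_recursion at 1. unfold chi01.
  destruct (Rle_dec 0 (x - 1)); [|lra]. destruct (Rle_dec (x - 1) 1); [lra|]. ring.
Qed.

Lemma spline_limit_bounds_1_3 y : 1 <= y <= 3 -> 0 <= spline_limit y <= 3.
Proof.
  intros Hy. rewrite (spline_limit_eq 2) by (simpl; lra).
  pose proof (spline_sum_bounds 2 y) as Hb. simpl INR in Hb. lra.
Qed.

Lemma spline_limit_eq_0 y : y < 1 -> spline_limit y = 0.
Proof.
  intros Hy. rewrite (spline_limit_eq 0) by (simpl; lra).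
  unfold spline_sum. simpl. unfold chi01. destruct (Rle_dec 0 (y - 0 - 1)); lra.
Qed.

Lemma spline_limit_eq_1 y : 1 < y < 2 -> spline_limit y = 1.
Proof.
  intros Hy. rewrite spline_limit_recursion, RInt_eq_0.
  - unfold chi01. destruct (Rle_dec 0 (y - 1)); [|lra].
    destruct (Rle_dec (y - 1) 1); [ring | lra].
  - lra.
  - intros x Hx. apply spline_limit_eq_0. lra.
Qed.

Lemma spline_limit_eq_sub2 y : 2 < y < 3 -> spline_limit y = y - 2.
Proof.
  intros Hy. rewrite spline_limit_recursion.
  rewrite <- (RInt_Chasles_R _ (y - 2) 1 (y - 1)) by apply ex_RInt_all_spline_limit.
  rewrite (RInt_eq_0 _ (y - 2) 1) by (try lra; intros; apply spline_limit_eq_0; lra).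
  rewrite (RInt_eq_const _ 1 (y - 1) 1) by (try lra; intros; apply spline_limit_eq_1; lra).
  unfold chi01. destruct (Rle_dec 0 (y - 1)); [|lra].
  destruct (Rle_dec (y - 1) 1); [lra | ring].
Qed.

Lemma spline_limit_invariant : window_invariant spline_limit 3 = 1.
Proof.
  unfold window_invariant. replace (3 - 2) with 1 by ring. replace (3 - 1) with 2 by ring.
  assert (H23 : RInt spline_limit 2 3 = 1/2 :> R).
  { rewrite (RInt_ext _ (fun y => 1 * y + -2)).
    - rewrite (RInt_affine (fun y => y)) by (eexists; apply is_RInt_id).
      rewrite (is_RInt_unique _ _ _ _ (is_RInt_id _ _)). field.
    - intros y Hy. rewrite Rmin_left, Rmax_right in Hy by lra.
      rewrite spline_limit_eq_sub2 by lra. lra. }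
  rewrite (RInt_ext _ (fun s => -1 * s + 5/2)).
  - rewrite (RInt_affine (fun s => s)) by (eexists; apply is_RInt_id).
    rewrite (is_RInt_unique _ _ _ _ (is_RInt_id _ _)). field.
  - intros s Hs. rewrite Rmin_left, Rmax_right in Hs by lra.
    rewrite <- (RInt_Chasles_R _ s 2 3) by apply ex_RInt_all_spline_limit.
    rewrite H23, (RInt_eq_const _ s 2 1) by (try lra; intros; apply spline_limit_eq_1; lra).
    lra.
Qed.

Theorem spline_limit_lim : is_lim spline_limit p_infty (2/3).
Proof.
  replace (2/3) with (2/3 * window_invariant spline_limit 3)
    by (rewrite spline_limit_invariant; ring).
  apply (window_average_lim spline_limit 3 ex_RInt_all_spline_limit
           spline_limit_window_average 0 3).
  intros y Hy. apply spline_limit_bounds_1_3. lra.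
Qed.

Lemma pow_fact_S_le_half r j : 0 <= r -> 2 * r <= INR (S j) ->
  2 * (r ^ S j / INR (fact (S j))) <= r ^ j / INR (fact j).
Proof.
  intros Hr Hj.
  assert (HSj : 0 < INR (S j)) by (apply lt_0_INR; lia).
  assert (Hfj : 0 < INR (fact j)) by apply INR_fact_lt_0.
  assert (Hrj : 0 <= r ^ j) by (apply pow_le; lra).
  replace (r ^ S j / INR (fact (S j))) with (r / INR (S j) * (r ^ j / INR (fact j)))
    by (rewrite fact_simpl, mult_INR; change (r ^ S j) with (r * r ^ j); field; lra).
  assert (r / INR (S j) <= 1/2).
  { apply (Rmult_le_reg_r (INR (S j))); [lra|].
    unfold Rdiv. rewrite Rmult_assoc, Rinv_l by lra. lra. }
  assert (0 <= r / INR (S j)) by (apply Rdiv_le_0_compat; lra).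
  assert (0 <= r ^ j / INR (fact j)) by (apply Rdiv_le_0_compat; lra).
  nra.
Qed.

Lemma spline_sum_tail n p t r : 0 <= r -> t <= r -> 2 * r <= INR (S n) ->
  0 <= spline_sum (n + p) (INR n + 1 + t) - spline_sum n (INR n + 1 + t) <=
    2 * (r ^ S n / INR (fact (S n))) - 2 * (r ^ S (n + p) / INR (fact (S (n + p)))).
Proof.
  intros Hr Ht Hn. induction p as [|p IH]; [rewrite Nat.add_0_r; lra|].
  rewrite Nat.add_succ_r, spline_sum_S.
  set (y := INR n + 1 + t - INR (S (n + p)) - 1).
  assert (Hy : y <= r)
    by (unfold y; rewrite !S_INR, plus_INR; pose proof (pos_INR p); lra).
  pose proof (Bspline_bounds (S (n + p)) y).
  pose proof (Bspline_le_pow_fact_ub (S (n + p)) y r Hr Hy).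
  assert (2 * (r ^ S (S (n + p)) / INR (fact (S (S (n + p)))))
            <= r ^ S (n + p) / INR (fact (S (n + p)))).
  { apply pow_fact_S_le_half; [exact Hr|].
    rewrite !S_INR, plus_INR in *. pose proof (pos_INR p). lra. }
  lra.
Qed.

Lemma spline_limit_sub_sum_lim t :
  is_lim_seq (fun n => spline_limit (INR n + 1 + t) - spline_sum n (INR n + 1 + t)) 0.
Proof.
  set (r := Rabs t). assert (Hr : 0 <= r) by apply Rabs_pos.
  destruct (nat_above t) as [p Hp]. destruct (nat_above (2 * r)) as [N HN].
  apply (is_lim_seq_le_le_loc (fun _ => 0) _ (fun n => 2 * (r ^ S n / INR (fact (S n))))).
  - exists N. intros n Hn.
    assert (HNn : INR N <= INR (S n)) by (apply le_INR; lia).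
    rewrite (spline_limit_eq (n + p)) by (rewrite plus_INR; lra).
    assert (0 <= r ^ S (n + p) / INR (fact (S (n + p))))
      by (apply Rdiv_le_0_compat; [apply pow_le, Hr | apply INR_fact_lt_0]).
    pose proof (spline_sum_tail n p t r Hr (Rle_abs t) ltac:(lra)). lra.
  - apply is_lim_seq_const.
  - replace (Finite 0) with (Rbar_mult 2 0) by (simpl; f_equal; ring).
    apply is_lim_seq_scal_l.
    apply (is_lim_seq_incr_1 (fun n => r ^ n / INR (fact n))).
    apply is_lim_seq_Reals, cv_speed_pow_fact.
Qed.

Theorem mainTheorem14 (t : R) (ht : 0 < t) :
  is_lim_seq (fun n : nat => sum_f_R0 (fun k : nat => Bspline (n - k)%nat (INR k + t)) n)
             (2 / 3).
Proof.
  apply (is_lim_seq_ext (fun n => spline_limit (INR n + 1 + t)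
           - (spline_limit (INR n + 1 + t) - spline_sum n (INR n + 1 + t)))).
  { intros n. rewrite sum_Bspline_reverse. ring. }
  replace (2 / 3) with (2 / 3 - 0) by ring.
  apply is_lim_seq_minus'; [|apply spline_limit_sub_sum_lim].
  apply (is_lim_comp_seq spline_limit (fun n => INR n + 1 + t) p_infty);
    [apply spline_limit_lim | exists 0%nat; discriminate |].
  apply (is_lim_seq_plus _ _ p_infty t); [| apply is_lim_seq_const | reflexivity].
  apply (is_lim_seq_plus _ _ p_infty 1);
    [apply is_lim_seq_INR | apply is_lim_seq_const | reflexivity].
Qed.
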